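(* Let $N\geq1$, $\delta=T/N$. Let $v_h^0$ be the greatest $v\in\mathcal W_h$ with $v\leq\phi$, and for $t=0,\delta,\dots,T-\delta$ let $v_h^{t+\delta}$ be the greatest $v\in\mathcal W_h$ with $\langle z_j,v\rangle\leq\langle z_j,S^\delta v_h^t\rangle$ for all $1\leq j\leq q$. Then for every $t\in\{0,\delta,\dots,T\}$ there exists a greatest $\lambda^t\in\overline{\mathbb{R}}^p$ with $v_h^t=W_h\lambda^t$, and these vectors satisfy $\lambda^0=W_h\backslash\phi$ and, for $t=0,\dots,T-\delta$ and $1\leq i\leq p$, \[ \lambda^{t+\delta}_i=\min_{1\leq j\leq q}\Big(\langle z_j,w_i\rangle\backslash\langle z_j,S^\delta(W_h\lambda^t)\rangle\Big). \]
   Context: $X\subseteq\mathbb{R}^n$, $U\subseteq\mathbb{R}^m$, $\ell:X\times U\to\mathbb R$, $f:X\times U\to\mathbb{R}^n$, $T>0$, $\phi:X\to\mathbb{R}\cup\{-\infty\}$; $S^\delta g(x)=\sup\{\int_0^\delta\ell(\mathbf x(s),\mathbf u(s))ds+g(\mathbf x(\delta))\}$ over measurable $\mathbf u:[0,\delta]\to U$ and absolutely continuous $\mathbf x:[0,\delta]\to X$ with $\dot{\mathbf x}=f(\mathbf x,\mathbf u)$ a.e., $\mathbf x(0)=x$. Arithmetic in $\overline{\mathbb R}=\mathbb{R}\cup\{\pm\infty\}$ with $-\infty$ absorbing for $+$; $a\backslash b=\max\{\lambda\in\overline{\mathbb{R}}:a+\lambda\leq b\}$. Finite elements $w_1,\dots,w_p$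 and test functions $z_1,\dots,z_q$ are functions $X\to\mathbb{R}\cup\{-\infty\}$. $\langle u,v\rangle=\sup_{x\in X}(u(x)+v(x))$; $W_h\lambda=\sup_i(w_i+\lambda_i)$; $\mathcal W_h=\{W_h\lambda:\lambda\in\overline{\mathbb R}^p\}$; $(W_h\backslash g)_i=\inf_{x\in X}(w_i(x)\backslash g(x))$. Functions are ordered pointwise. *)

From HB Require Import structures.
From mathcomp Require Import all_boot all_order all_algebra.
From mathcomp Require Import all_classical all_reals all_analysis.
Set Implicit Arguments. Unset Strict Implicit. Unset Printing Implicit Defensive.
Import Order.TTheory GRing.Theory Num.Theory.
Import numFieldNormedType.Exports.
Local Open Scope classical_set_scope.
Local Open Scope ring_scope.

Section MaxPlus.
Variable R : realType.
Local Open Scope ereal_scope.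

(** residuation  a \ b = max { l in \bar R | a + l <= b }  (with -oo absorbing
    for +, which is mathcomp's convention for +%E) *)
Definition eres (a b : \bar R) : \bar R := ereal_sup [set l | a + l <= b].

Definition epair {T} (X : set T) (u v : T -> \bar R) : \bar R :=
  ereal_sup [set u x + v x | x in X].

Definition Wh {T} p (w : 'I_p -> T -> \bar R) (lam : 'I_p -> \bar R) : T -> \bar R :=
  fun x => \big[maxe/-oo]_(i < p) (w i x + lam i).

Definition Wres {T} (X : set T) p (w : 'I_p -> T -> \bar R) (g : T -> \bar R)
  : 'I_p -> \bar R :=
  fun i => ereal_inf [set eres (w i x) (g x) | x in X].

Definition fle {T} (X : set T) (u v : T -> \bar R) := forall x, X x -> u x <= v x.
Definition feq {T} (X : set T) (u v : T -> \bar R) := forall x, X x -> u x = v x.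

Definition inWh {T} (X : set T) p (w : 'I_p -> T -> \bar R) (v : T -> \bar R) :=
  exists lam : 'I_p -> \bar R, feq X v (Wh w lam).

Definition greatest_fun {T} (X : set T) (A : set (T -> \bar R)) (v : T -> \bar R) :=
  A v /\ forall v', A v' -> fle X v' v.

Definition greatest_vec p (A : set ('I_p -> \bar R)) (lam : 'I_p -> \bar R) :=
  A lam /\ forall l, A l -> forall i, l i <= lam i.

End MaxPlus.

Section Control.
Variables (R : realType) (n m : nat).
Local Open Scope ereal_scope.

Definition abs_cont_on (a b : R) (x : R -> 'rV[R]_n) : Prop :=
  forall e : R, (0 < e)%R -> exists d : R, (0 < d)%R /\
    forall (k : nat) (a' b' : 'I_k -> R),
      (forall i, (a <= a' i)%R /\ (a' i <= b' i)%R /\ (b' i <= b)%R) ->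
      (forall i j, i != j -> (b' i <= a' j)%R \/ (b' j <= a' i)%R) ->
      (\sum_(i < k) (b' i - a' i) < d)%R ->
      (\sum_(i < k) `|x (b' i) - x (a' i)| < e)%R.

Definition admissible (X : set 'rV[R]_n) (U : set 'rV[R]_m)
  (f : 'rV[R]_n -> 'rV[R]_m -> 'rV[R]_n) (delta : R) (x0 : 'rV[R]_n)
  (u : R -> 'rV[R]_m) (x : R -> 'rV[R]_n) : Prop :=
  [/\ (forall j : 'I_m, measurable_fun `[0%R, delta] (fun s => u s ord0 j)),
      (forall s, (0 <= s <= delta)%R -> U (u s)),
      abs_cont_on 0 delta x /\ (forall s, (0 <= s <= delta)%R -> X (x s)),
      {ae (@lebesgue_measure R), forall s, (0 < s < delta)%R ->
          is_derive s 1%R x (f (x s) (u s))}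
    & x 0%R = x0].

Definition Sdelta (X : set 'rV[R]_n) (U : set 'rV[R]_m)
  (l : 'rV[R]_n -> 'rV[R]_m -> R) (f : 'rV[R]_n -> 'rV[R]_m -> 'rV[R]_n)
  (delta : R) (g : 'rV[R]_n -> \bar R) (x0 : 'rV[R]_n) : \bar R :=
  ereal_sup [set J | exists u x, admissible X U f delta x0 u x /\
     J = (\int[@lebesgue_measure R]_(s in `[0%R, delta]) (l (x s) (u s))%:E)
         + g (x delta)].

End Control.

From HB Require Import structures.
From mathcomp Require Import all_boot all_order all_algebra.
From mathcomp Require Import all_classical all_reals all_analysis.
Set Implicit Arguments. Unset Strict Implicit. Unset Printing Implicit Defensive.
Import Order.TTheory GRing.Theory Num.Theory.
Import numFieldNormedType.Exports.
Local Open Scope classical_set_scope.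
Local Open Scope ring_scope.

(* Residuation makes [l |-> a + l] and [b |-> a \ b] a Galois connection, and
   hence so are [W_h] and [W_h \]: for u in W_h, [W_h \ u] is the greatest
   representative of u.  Since <z, W_h mu> = sup_i (<z, w_i> + mu_i), the
   constraints <z_j, W_h mu> <= c_j decouple into mu_i <= <z_j, w_i> \ c_j, so
   the feasible vectors have the greatest element min_j (<z_j, w_i> \ c_j).
   Finally S^delta only sees values on X, where v^t and W_h lambda^t agree. *)

Section Residuation.
Variable R : realType.
Local Open Scope ereal_scope.

Lemma adde_eres_le (a b : \bar R) : a + eres a b <= b.
Proof.
case: a => [r| |]; last by rewrite addNye leNye.
- have : eres r%:E b <= b - r%:E by apply: ge_ereal_sup => y; rewrite leeBrDl.
  by rewrite leeBrDl.
- have [->|b_ney] := eqVneq b +oo; first exact: leey.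
  suff -> : eres +oo b = -oo by rewrite addeNy leNye.
  apply/eqP; rewrite -leeNy_eq; apply: ge_ereal_sup => -[y| |] //=;
    by rewrite leye_eq (negbTE b_ney).
Qed.

Lemma le_eres (a b l : \bar R) : l <= eres a b <-> a + l <= b.
Proof.
split=> [l_le|]; last exact: ereal_sup_ubound.
exact: le_trans (leeD2l a l_le) (adde_eres_le a b).
Qed.

End Residuation.

Section MaxPlusSpace.
Variables (R : realType) (T : Type) (X : set T) (p : nat).
Variable w : 'I_p -> T -> \bar R.
Local Open Scope ereal_scope.

Lemma Wh_le lam x c : Wh w lam x <= c <-> forall i, w i x + lam i <= c.
Proof.
split=> [/bigmax_leP[_ le_c] i|le_c]; first exact: le_c.
by apply/bigmax_leP; split=> [|i _]; [exact: leNye | exact: le_c].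
Qed.

Lemma Wh_ub lam x i : w i x + lam i <= Wh w lam x.
Proof. by move/Wh_le: (lexx (Wh w lam x)). Qed.

Lemma le_Wh lam lam' x :
  (forall i, lam i <= lam' i) -> Wh w lam x <= Wh w lam' x.
Proof.
move=> le_lam; apply/Wh_le => i.
exact: le_trans (leeD2l _ (le_lam i)) (Wh_ub _ _ _).
Qed.

Lemma le_Wres g lam : (forall i, lam i <= Wres X w g i) <-> fle X (Wh w lam) g.
Proof.
split=> [le_lam x Xx|le_g i].
- apply/Wh_le => i; apply/le_eres; apply: le_trans (le_lam i) _.
  by apply: ereal_inf_lbound; exists x.
- by apply: le_ereal_inf_tmp => _ [x Xx <-]; apply/le_eres/(Wh_le _ _ _).1/le_g.
Qed.

Lemma Wh_Wres_le g : fle X (Wh w (Wres X w g)) g.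
Proof. exact/le_Wres. Qed.

Lemma Wres_greatest u :
  inWh X w u -> greatest_vec [set lm | feq X u (Wh w lm)] (Wres X w u).
Proof.
move=> [mu u_mu]; split=> [x Xx|lam u_lam]; last first.
  by apply/le_Wres => x Xx; rewrite -u_lam.
have le_mu i : mu i <= Wres X w u i by move: i; apply/le_Wres => y Xy; rewrite -u_mu.
apply/le_anti; rewrite Wh_Wres_le // andbT u_mu //; exact: le_Wh.
Qed.

Lemma Wres_greatest_below v g :
  greatest_fun X [set u | inWh X w u /\ fle X u g] v -> Wres X w v = Wres X w g.
Proof.
move=> [[v_in v_le] v_max]; have [v_eq _] := Wres_greatest v_in.
apply/funext => i; apply/le_anti/andP; split; move: i; apply/le_Wres.
- by move=> x Xx; rewrite -v_eq //; exact: v_le.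
- by apply: v_max; split; [exists (Wres X w g) | exact: Wh_Wres_le].
Qed.

Lemma epair_ub (u v : T -> \bar R) x : X x -> u x + v x <= epair X u v.
Proof. by move=> Xx; apply: ereal_sup_ubound; exists x. Qed.

Lemma epair_le (u v : T -> \bar R) c :
  (forall x, X x -> u x + v x <= c) -> epair X u v <= c.
Proof. by move=> le_c; apply: ge_ereal_sup => _ [x Xx <-]; exact: le_c. Qed.

Lemma eq_epair (z u u' : T -> \bar R) : feq X u u' -> epair X z u = epair X z u'.
Proof. by move=> u_u'; congr ereal_sup; apply: eq_imagel => x Xx; rewrite u_u'. Qed.

Lemma epair_Wh_le (z : T -> \bar R) mu c :
  epair X z (Wh w mu) <= c <-> forall i, epair X z (w i) + mu i <= c.
Proof.
split=> [le_c i|le_c].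
- rewrite addeC -le_eres; apply: epair_le => x Xx; apply/le_eres.
  rewrite addeC -addeA; apply: le_trans _ (le_trans (epair_ub _ _ Xx) le_c).
  exact/leeD2l/Wh_ub.
- apply: epair_le => x Xx; rewrite -le_eres; apply/Wh_le => i; apply/le_eres.
  rewrite addeA; apply: le_trans (le_c i); exact/leeD2r/epair_ub.
Qed.

Variables (q : nat) (z : 'I_q -> T -> \bar R) (c : 'I_q -> \bar R).

Definition constrained_Wres : 'I_p -> \bar R :=
  fun i => \big[mine/+oo]_(j < q) eres (epair X (z j) (w i)) (c j).

Lemma le_constrained_Wres mu :
  (forall i, mu i <= constrained_Wres i) <->
  (forall j, epair X (z j) (Wh w mu) <= c j).
Proof.
split=> [le_mu j|le_c i].
- apply/epair_Wh_le => i; rewrite -le_eres; apply: le_trans (le_mu i) _.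
  exact: bigmin_le.
- apply: le_bigmin => [|j _]; first exact: leey.
  by apply/le_eres; move: i; apply/epair_Wh_le.
Qed.

Lemma Wres_greatest_constrained v :
  greatest_fun X [set u | inWh X w u /\ forall j, epair X (z j) u <= c j] v ->
  Wres X w v = constrained_Wres.
Proof.
move=> [[v_in v_sat] v_max]; have [v_eq _] := Wres_greatest v_in.
apply/funext => i; apply/le_anti/andP; split; move: i.
- by apply/le_constrained_Wres => j; rewrite -(eq_epair _ v_eq).
- apply/le_Wres/v_max; split; first by exists constrained_Wres.
  exact/le_constrained_Wres.
Qed.

End MaxPlusSpace.

Lemma eq_Sdelta (R : realType) (n m : nat) (X : set 'rV[R]_n) (U : set 'rV[R]_m)
    (l : 'rV[R]_n -> 'rV[R]_m -> R) (f : 'rV[R]_n -> 'rV[R]_m -> 'rV[R]_n)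
    (delta : R) (g g' : 'rV[R]_n -> \bar R) :
  0 <= delta -> feq X g g' -> Sdelta X U l f delta g = Sdelta X U l f delta g'.
Proof.
move=> delta_ge0 g_g'; apply/funext => x0.
have end_in u x : admissible X U f delta x0 u x -> X (x delta).
  by case=> _ _ [_ x_in] _ _; apply: x_in; rewrite lexx delta_ge0.
congr ereal_sup; apply/seteqP; split=> _ [u [x [adm ->]]]; exists u, x;
  by rewrite g_g' //; exact: end_in adm.
Qed.

Theorem proposition3p2 (R : realType) (n m : nat)
  (X : set 'rV[R]_n) (U : set 'rV[R]_m)
  (l : 'rV[R]_n -> 'rV[R]_m -> R) (f : 'rV[R]_n -> 'rV[R]_m -> 'rV[R]_n)
  (T : R) (hT : 0 < T) (phi : 'rV[R]_n -> \bar R)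
  (hphi : forall x, X x -> phi x != +oo%E)
  (p q : nat) (w : 'I_p -> 'rV[R]_n -> \bar R) (z : 'I_q -> 'rV[R]_n -> \bar R)
  (hw : forall i x, X x -> w i x != +oo%E)
  (hz : forall j x, X x -> z j x != +oo%E)
  (N : nat) (hN : (1 <= N)%N)
  (v : nat -> 'rV[R]_n -> \bar R)
  (hv0 : greatest_fun X [set u | inWh X w u /\ fle X u phi] (v 0%N))
  (hvS : forall k, (k < N)%N ->
     greatest_fun X
       [set u | inWh X w u /\ forall j : 'I_q,
          (epair X (z j) u <= epair X (z j) (Sdelta X U l f (T / N%:R) (v k)))%E]
       (v k.+1)) :
  exists lam : nat -> 'I_p -> \bar R,
    [/\ (forall k, (k <= N)%N ->
           greatest_vec [set lm | feq X (v k) (Wh w lm)] (lam k)),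
        lam 0%N = Wres X w phi
      & forall k, (k < N)%N -> forall i : 'I_p,
          lam k.+1 i =
          \big[mine/+oo%E]_(j < q)
             eres (epair X (z j) (w i))
                  (epair X (z j) (Sdelta X U l f (T / N%:R) (Wh w (lam k))))].
Proof.
have delta_ge0 : 0 <= T / N%:R by rewrite divr_ge0 // ltW.
have v_in k : (k <= N)%N -> inWh X w (v k).
  by case: k => [|k] k_le; [case: hv0 => -[] | case: (hvS k k_le) => -[]].
exists (fun k => Wres X w (v k)); split.
- by move=> k /v_in; exact: Wres_greatest.
- exact: Wres_greatest_below hv0.
- move=> k k_lt i; rewrite (Wres_greatest_constrained (hvS k k_lt)).
  have [v_eq _] := Wres_greatest (v_in k (ltnW k_lt)).
  by rewrite (eq_Sdelta U l f delta_ge0 v_eq).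
Qed.
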